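(* Let $k\ge3$ and $m\ge1$ be integers and consider any realization of the random $k$-Apollonian network $A(m)$. For an edge $e$ of $A(m)$ let $N^{\ast}(e)$ be the number of active $k$-cliques of $A(m)$ containing $e$. Let $F$ be the spanning forest of $A(m)$ defined as follows: for each $1\le t\le m$, if the vertex $x$ born in round $t$ was joined to the $k$-clique $C$, then in $F$ the vertex $x$ is joined to a vertex $u\in V(C)$ with $N^{\ast}(xu)=\max_{v\in V(C)}N^{\ast}(xv)$ (ties broken arbitrarily). If $xy\in E(F)$, $x$ is born later than $y$, and the degree of $x$ in $A(m)$ is at least $2k-1$, then $N^{\ast}(xy)\ge (k-1)^2/2$.
   Context: Random $k$-Apollonian process: $A(0)$ is a clique on $k$ vertices (born in round $0$), marked active. For $t\ge1$, $A(t)$ is obtained from $A(t-1)$ by choosing an active $k$-clique of $A(t-1)$ uniformly at random and creating a new vertex (born in round $t$) joined to all its vertices; the chosen clique becomes non-active and the $k$ new $k$-cliques containing the new vertex are marked active. *)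

From mathcomp Require Import all_boot.
Set Implicit Arguments. Unset Strict Implicit. Unset Printing Implicit Defensive.

(* A realization of the random k-Apollonian process up to round m is encoded
   deterministically by a sequence [s] of choices: in round t (t >= 1) the
   clique chosen is the (nth 0 s (t-1))-th element of the list of active
   cliques of A(t-1).  Vertices are natural numbers: the initial clique is
   {0,...,k-1} (born in round 0) and the vertex born in round t >= 1 is k+t-1.
   A k-clique is represented by the list of its vertices. *)

Fixpoint active (k : nat) (s : seq nat) (t : nat) : seq (seq nat) :=
  match t with
  | 0 => [:: iota 0 k]
  | t'.+1 =>
      let A := active k s t' in
      let i := nth 0 s t' in
      let C := nth [::] A i in
      (take i A ++ drop i.+1 A) ++ [seq (k + t') :: rem v C | v <- C]
  end.

Definition chosen (k : nat) (s : seq nat) (t : nat) : seq nat :=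
  nth [::] (active k s t.-1) (nth 0 s t.-1).

Definition realization (k m : nat) (s : seq nat) : Prop :=
  size s = m /\ forall t, t < m -> nth 0 s t < size (active k s t).

Definition born (k v : nat) : nat := if k <= v then v - k + 1 else 0.

Definition vertexA (k m v : nat) : bool := v < k + m.

Definition adjA (k : nat) (s : seq nat) (x y : nat) : bool :=
  (x != y) &&
  [|| (x < k) && (y < k),
      (k <= x) && (y \in chosen k s (born k x))
    | (k <= y) && (x \in chosen k s (born k y))].

Definition degA (k m : nat) (s : seq nat) (x : nat) : nat :=
  count (adjA k s x) (iota 0 (k + m)).

Definition Nstar (k m : nat) (s : seq nat) (x y : nat) : nat :=
  count (fun C => (x \in C) && (y \in C)) (active k s m).

Definition forest_parent (k m : nat) (s : seq nat) (par : nat -> nat) : Prop :=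
  forall t, 1 <= t <= m ->
    let x := k + t - 1 in
    let C := chosen k s t in
    par x \in C /\ (forall v, v \in C -> Nstar k m s x v <= Nstar k m s x (par x)).

Definition edgeF (k m : nat) (par : nat -> nat) (x y : nat) : bool :=
  [|| (k <= x) && (x < k + m) && (par x == y)
    | (k <= y) && (y < k + m) && (par y == x)].

From mathcomp Require Import all_boot zify.
Set Implicit Arguments. Unset Strict Implicit. Unset Printing Implicit Defensive.

(* Let x be born in round t+1 and joined to the clique C.  For an active
   clique E containing x write b(E) = |E ∩ C|, and let J count the later
   neighbours of x, i.e. the rounds in which a clique containing x is chosen.
   From round t+1 on two invariants hold.  First, b(E) + J >= k - 1 for every
   active E containing x, since each subdivision of such an E loses at most
   one vertex of C.  Second, the potential P = sum of b(E) over the active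
   cliques containing x satisfies P >= k(k-1) + (k-3) G(J), where
   G(J) = sum_{i<J} (k-1-i): subdividing an active D containing x replaces
   b(D) by the values on its k-1 children containing x, which add up to
   (k-2) b(D), so P grows by (k-3) b(D) >= (k-3) (k-1-J).  Finally
   P = sum_{u in C} N*(xu) <= k N*(x par(x)), and deg x <= k + J, so
   deg x >= 2k-1 gives J >= k-1 and G(J) >= G(k-1) = k(k-1)/2; hence
   k N*(x par(x)) >= k(k-1)^2/2. *)

Lemma sum_bool_count (I : Type) (r : seq I) (a : pred I) :
  \sum_(i <- r) a i = count a r.
Proof. by rewrite -sum1_count [RHS]big_mkcond. Qed.

Section Overlap.
Variable T : eqType.
Implicit Types (x z v : T) (C D E : seq T).

Lemma count_mem_sym (s1 s2 : seq T) :
  uniq s1 -> uniq s2 -> count (mem s2) s1 = count (mem s1) s2.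
Proof.
move=> s1_uniq s2_uniq; rewrite -!size_filter; apply/perm_size/uniq_perm.
- exact: filter_uniq.
- exact: filter_uniq.
- by move=> u; rewrite !mem_filter andbC.
Qed.

Definition overlap C E := count (mem E) C.

Definition weight x C E := if x \in E then overlap C E else 0.

Lemma overlap_self C : overlap C C = size C.
Proof. by rewrite /overlap (eq_in_count (a2 := predT)) ?count_predT. Qed.

Lemma mem_child x z v D :
  uniq D -> x != z -> (x \in z :: rem v D) = (x \in D) && (x != v).
Proof. by move=> D_uniq xz; rewrite in_cons (negbTE xz) (mem_rem_uniq _ D_uniq) inE andbC. Qed.

Lemma overlap_child C D z v : uniq C -> uniq D -> z \notin C -> v \in D ->
  overlap C (z :: rem v D) + (v \in C) = overlap C D.
Proof.
move=> C_uniq D_uniq zC vD.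
rewrite /overlap -[RHS]size_filter -(count_predC (pred1 v) (filter (mem D) C)).
rewrite !count_filter addnC; congr (_ + _).
- rewrite -count_uniq_mem //; apply: eq_count => u /=.
  by case: eqP => // ->; rewrite vD.
- apply: eq_in_count => u uC /=; rewrite in_cons (mem_rem_uniq _ D_uniq) inE.
  by have -> : (u == z) = false by apply: contraNF zC => /eqP <-.
Qed.

Lemma sum_weight_children_notin x C D z : x \notin D -> x != z ->
  \sum_(v <- D) weight x C (z :: rem v D) = 0.
Proof.
move=> xD xz; apply: big1_seq => v _; rewrite /weight in_cons (negbTE xz) /=.
by case: ifP => // /mem_rem; rewrite (negbTE xD).
Qed.

Lemma sum_weight_children x C D z : uniq C -> uniq D -> x \in D -> x \notin C ->
    z \notin C -> x != z ->
  \sum_(v <- D) weight x C (z :: rem v D) + overlap C D = (size D).-1 * overlap C D.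
Proof.
move=> C_uniq D_uniq xD xC zC xz.
have child v : v \in D ->
    weight x C (z :: rem v D) + (v \in C) = (v != x) * overlap C D.
  move=> vD; rewrite /weight mem_child // xD eq_sym /=.
  by case: eqP => [->|_]; rewrite ?(negbTE xC) ?mul1n ?overlap_child.
have sum_mem : \sum_(v <- D) (v \in C) = overlap C D.
  by rewrite sum_bool_count /overlap count_mem_sym.
have size_rem_x : count (predC1 x) D = (size D).-1.
  by rewrite -size_filter -rem_filter // size_rem.
rewrite -{1}sum_mem -big_split (eq_big_seq _ child) /= -big_distrl /=.
by rewrite sum_bool_count size_rem_x.
Qed.

Lemma sum_weight x C (L : seq (seq T)) :
  \sum_(E <- L) weight x C E = \sum_(u <- C) count (fun E => (x \in E) && (u \in E)) L.
Proof.
have weightE E : weight x C E = \sum_(u <- C) ((x \in E) && (u \in E)).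
  rewrite /weight /overlap; case: (x \in E); first by rewrite -sum_bool_count.
  by rewrite big1.
rewrite (eq_bigr _ (fun E _ => weightE E)) exchange_big /=.
by apply: eq_bigr => u _; rewrite sum_bool_count.
Qed.

End Overlap.

Definition gain k j := \sum_(i < j) (k - 1 - i).

Lemma gainS k j : gain k j.+1 = gain k j + (k - 1 - j).
Proof. by rewrite /gain big_ord_recr. Qed.

Lemma leq_gain k : {homo gain k : i j / i <= j}.
Proof.
apply: homo_leq => [//|j i l|i]; first exact: leq_trans.
by rewrite gainS leq_addr.
Qed.

Lemma gain_full k : 2 * gain k (k - 1) = k * (k - 1).
Proof.
(* The [i]-th term and the [(k - 2 - i)]-th term add up to [k]. *)
rewrite mul2n -addnn {1}/gain (reindex_inj rev_ord_inj) -big_split /=.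
rewrite (eq_bigr (fun _ => k)) => [|i _]; last by have := ltn_ord i; lia.
by rewrite sum_nat_const card_ord mulnC.
Qed.

Lemma chosen_mem k s T v : v \in chosen k s T.+1 -> chosen k s T.+1 \in active k s T.
Proof.
rewrite /chosen /=; case: (ltnP (nth 0 s T) (size (active k s T))) => [lt_i _|ge_i].
  exact: mem_nth.
by rewrite nth_default.
Qed.

Lemma chosen_active k m s T : realization k m s -> T < m ->
  chosen k s T.+1 \in active k s T.
Proof. by case=> _ valid /valid; apply: mem_nth. Qed.

Lemma mem_active_succ k s T E : E \in active k s T.+1 ->
  E \in active k s T \/
  exists2 v, v \in chosen k s T.+1 & E = (k + T) :: rem v (chosen k s T.+1).
Proof.
rewrite /= mem_cat => /orP [|/mapP [v vD ->]]; last by right; exists v.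
by rewrite mem_cat => /orP [/mem_take|/mem_drop]; left.
Qed.

Lemma sum_active_succ k s T (F : seq nat -> nat) :
  nth 0 s T < size (active k s T) ->
  \sum_(E <- active k s T.+1) F E + F (chosen k s T.+1) =
  \sum_(E <- active k s T) F E +
    \sum_(v <- chosen k s T.+1) F ((k + T) :: rem v (chosen k s T.+1)).
Proof.
rewrite /chosen /=; set A := active k s T; set i := nth 0 s T => lt_i.
rewrite -[in \sum_(E <- A) F E](cat_take_drop i A) (drop_nth [::] lt_i).
rewrite !big_cat big_cons big_map /=; lia.
Qed.

Lemma active_clique k s T E : E \in active k s T ->
  [/\ uniq E, size E = k & {in E, forall v, v < k + T}].
Proof.
elim: T E => [|T IH] E.
  rewrite inE => /eqP ->; split; [exact: iota_uniq | exact: size_iota |].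
  by move=> v; rewrite mem_iota; lia.
case/mem_active_succ => [/IH [E_uniq E_size E_lt]|[v vD ->]].
  by split=> // v /E_lt; lia.
have [D_uniq D_size D_lt] := IH _ (chosen_mem vD).
split.
- rewrite /= rem_uniq // andbT; apply/negP => /mem_rem /D_lt; lia.
- by rewrite /= size_rem // D_size prednK // -D_size; case: (chosen k s T.+1) vD.
- by move=> u; rewrite inE => /predU1P [->|/mem_rem /D_lt]; lia.
Qed.

Lemma chosen_lt k s T v : v \in chosen k s T.+1 -> v < k + T.
Proof. by move=> vD; have [_ _] := active_clique (chosen_mem vD); apply. Qed.

Lemma notin_chosen k s T z : k + T <= z -> z \notin chosen k s T.+1.
Proof. by move=> le_z; apply/negP => /chosen_lt; lia. Qed.

Lemma chosen_uniq k s T : uniq (chosen k s T.+1).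
Proof.
case D_eq: (chosen k s T.+1) => [//|v D].
have vD : v \in chosen k s T.+1 by rewrite D_eq mem_head.
by have [+ _ _] := active_clique (chosen_mem vD); rewrite D_eq.
Qed.

Lemma born_succ k T : born k (k + T) = T.+1.
Proof. by rewrite /born leq_addr; lia. Qed.

Lemma born_chosen_leq k s T v : v \in chosen k s T.+1 -> born k v <= T.
Proof. by move/chosen_lt; rewrite /born; case: ifP; lia. Qed.

Section Potential.
Variables (k m : nat) (s : seq nat) (t : nat).

(* [x] is the vertex born in round [t.+1]. *)
Local Notation x := (k + t).
Local Notation C := (chosen k s t.+1).

Definition later_degree T := count (fun T' => x \in chosen k s T'.+1) (iota 0 T).

Definition potential T := \sum_(E <- active k s T) weight x C E.

Lemma later_degree_start : later_degree t.+1 = 0.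
Proof.
rewrite /later_degree (eq_in_count (a2 := pred0)) ?count_pred0 // => T'.
by rewrite mem_iota => T'_lt; apply/negbTE/notin_chosen; lia.
Qed.

Lemma later_degreeS T : later_degree T.+1 = later_degree T + (x \in chosen k s T.+1).
Proof. by rewrite /later_degree -[in iota 0 T.+1]addn1 iotaD count_cat /= addn0. Qed.

Lemma overlap_first_child v : v \in C -> overlap C (x :: rem v C) = k - 1.
Proof.
move=> vC; have [C_uniq C_size _] := active_clique (chosen_mem vC).
have := overlap_child C_uniq C_uniq (notin_chosen s (leqnn x)) vC.
by rewrite overlap_self C_size vC /=; lia.
Qed.

Lemma overlap_start E : E \in active k s t.+1 -> x \in E -> overlap C E = k - 1.
Proof.
case/mem_active_succ => [/active_clique [_ _ E_lt] /E_lt|[v vC ->] _]; first lia.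
exact: overlap_first_child.
Qed.

Lemma overlap_bound T E : t < T -> E \in active k s T -> x \in E ->
  k - 1 <= overlap C E + later_degree T.
Proof.
elim: T E => [//|T IH] E; rewrite ltnS leq_eqVlt => /predU1P [<- E_act xE|t_lt_T].
  by rewrite overlap_start // later_degree_start addn0.
rewrite later_degreeS; case/mem_active_succ => [E_old xE|[v vD ->]].
  by have := IH _ t_lt_T E_old xE; lia.
have [D_uniq _ _] := active_clique (chosen_mem vD).
have x_ne_z : x != k + T by apply/eqP; lia.
rewrite mem_child // => /andP [xD _].
have := IH _ t_lt_T (chosen_mem vD) xD.
have zC : k + T \notin C by apply: notin_chosen; lia.
have := overlap_child (chosen_uniq k s t) D_uniq zC vD.
by rewrite xD /=; case: (v \in C) => /=; lia.
Qed.

Lemma degA_le : degA k m s x <= size C + later_degree m.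
Proof.
set later := fun y => (k <= y) && (x \in chosen k s (born k y)).
have adj_sub : subpred (adjA k s x) (predU (mem C) later).
  move=> y /andP [_ /or3P [/andP [x_lt_k _]|/andP [_]|later_y]] /=; first lia.
    by rewrite born_succ => ->.
  by apply/orP; right.
have C_part : count (mem C) (iota 0 (k + m)) <= size C.
  rewrite -size_filter; apply: uniq_leq_size; first by rewrite filter_uniq ?iota_uniq.
  by move=> u; rewrite mem_filter => /andP [].
have later_part : count later (iota 0 (k + m)) = later_degree m.
  rewrite iotaD count_cat add0n (eq_in_count (a2 := pred0)) ?count_pred0; last first.
    by move=> y; rewrite mem_iota add0n /later => /andP [_ /ltn_geF ->].
  have -> : iota k m = map (addn k) (iota 0 m) by rewrite -iotaDl addn0.
  by rewrite count_map; apply: eq_count => T' /=; rewrite /later born_succ leq_addr.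
rewrite /degA -later_part; apply: leq_trans (sub_count adj_sub _) _.
by apply: leq_trans (leq_add C_part (leqnn _)); rewrite -count_predUI leq_addr.
Qed.

Hypothesis s_real : realization k m s.

Lemma potential_start : t < m -> potential t.+1 = k * (k - 1).
Proof.
move=> t_lt_m; have [_ C_size _] := active_clique (chosen_active s_real t_lt_m).
have lt_i : nth 0 s t < size (active k s t) by case: s_real => _; apply.
have old_zero : \sum_(E <- active k s t) weight x C E = 0.
  apply: big1_seq => E /andP [_ /active_clique [_ _ E_lt]].
  by rewrite /weight; case: ifP => // /E_lt; lia.
have C_weight : weight x C C = 0 by rewrite /weight (negbTE (notin_chosen s (leqnn x))).
have child_weight v : v \in C -> weight x C (x :: rem v C) = k - 1.
  by move=> vC; rewrite /weight mem_head overlap_first_child.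
have := sum_active_succ (weight x C) lt_i.
rewrite old_zero C_weight (eq_big_seq _ child_weight) big_const_seq count_predT.
by rewrite iter_addn_0 C_size /potential; lia.
Qed.

Hypothesis k_ge3 : 3 <= k.

Lemma potential_succ T : t < T < m ->
  potential T.+1 =
  potential T + (x \in chosen k s T.+1) * ((k - 3) * overlap C (chosen k s T.+1)).
Proof.
move=> /andP [t_lt_T T_lt_m].
have lt_i : nth 0 s T < size (active k s T) by case: s_real => _; apply.
have [D_uniq D_size _] := active_clique (chosen_active s_real T_lt_m).
have zC : k + T \notin C by apply: notin_chosen; lia.
have xz : x != k + T by apply/eqP; lia.
have := sum_active_succ (weight x C) lt_i; rewrite -!/(potential _).
case xD: (x \in chosen k s T.+1).
  have := sum_weight_children (chosen_uniq k s t) D_uniq xD (notin_chosen s (leqnn x)) zC xz.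
  rewrite /weight xD D_size mul1n.
  set ov := overlap C _; set S := \sum_(v <- _) _; nia.
rewrite sum_weight_children_notin ?xD // /weight xD /=; lia.
Qed.

Lemma potential_bound T : t < T -> T <= m ->
  k * (k - 1) + (k - 3) * gain k (later_degree T) <= potential T.
Proof.
elim: T => [//|T IH].
rewrite ltnS leq_eqVlt => /predU1P [<- t_lt_m|t_lt_T T_lt_m].
  by rewrite potential_start // later_degree_start /gain big_ord0 muln0 addn0.
have := IH t_lt_T (ltnW T_lt_m).
rewrite potential_succ ?t_lt_T // later_degreeS.
case xD: (x \in chosen k s T.+1) => /=; last by rewrite !addn0.
have := overlap_bound t_lt_T (chosen_active s_real T_lt_m) xD.
rewrite addn1 gainS mulnDr mul1n.
set J := later_degree T; set ov := overlap C _ => ov_J.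
have : (k - 3) * (k - 1 - J) <= (k - 3) * ov by rewrite leq_mul2l; apply/orP; right; lia.
lia.
Qed.

End Potential.

Lemma born_parent_lt k m s par y : forest_parent k m s par ->
  k <= y -> y < k + m -> born k (par y) < born k y.
Proof.
move=> s_par y_ge_k y_lt_km.
have t_range : 1 <= (y - k).+1 <= m by lia.
have [] := s_par _ t_range; have -> : k + (y - k).+1 - 1 = y by lia.
move=> /born_chosen_leq par_born _.
by have := born_succ k (y - k); rewrite subnKC //; lia.
Qed.

Theorem lemma13 (k m : nat) (s : seq nat) (par : nat -> nat) :
  3 <= k -> 1 <= m ->
  realization k m s ->
  forest_parent k m s par ->
  forall x y : nat,
    edgeF k m par x y ->
    born k y < born k x ->
    2 * k - 1 <= degA k m s x ->
    (k - 1) ^ 2 <= 2 * Nstar k m s x y.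
Proof.
move=> k_ge3 _ s_real s_par x y xy_F y_before_x deg_x.
have [x_ge_k x_lt_km <-] : [/\ k <= x, x < k + m & par x = y].
  case/orP: xy_F => /andP [/andP [z_ge_k z_lt_km] /eqP par_z]; first by [].
  by have := born_parent_lt s_par z_ge_k z_lt_km; rewrite par_z; lia.
set t := x - k; have x_eq : x = k + t by rewrite subnKC.
have t_lt_m : t < m by lia.
have t_range : 1 <= t.+1 <= m by lia.
have [] := s_par _ t_range; have -> : k + t.+1 - 1 = x by lia.
move=> _ par_max.
have [_ C_size _] := active_clique (chosen_active s_real t_lt_m).
have potential_le : potential k s t m <= k * Nstar k m s x (par x).
  rewrite /potential sum_weight -x_eq.
  apply: (@leq_trans (\sum_(u <- chosen k s t.+1) Nstar k m s x (par x))).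
    rewrite big_seq_cond [X in _ <= X]big_seq_cond.
    by apply: leq_sum => u /andP [uC _]; exact: par_max.
  by rewrite big_const_seq count_predT iter_addn_0 C_size mulnC.
have := potential_bound s_real k_ge3 t_lt_m (leqnn m).
have later_ge : k - 1 <= later_degree k s t m.
  by have := @degA_le k m s t; rewrite -x_eq C_size; lia.
have := leq_gain k later_ge; have := gain_full k.
nia.
Qed.
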